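(* Let $D'\geq2$ and let $j_{1},j_{2}\geq0$ be integers with $j_{1}+j_{2}=D'-2$. Let $M$ be the $\mathfrak{m}\times D'$ circulant matrix whose first row is $(1,0^{j_{1}},-1,0^{j_{2}})$, where $0^{j}$ denotes $j$ consecutive zeros. If $\mathfrak{m}\leq\lceil D'/2\rceil$, then the rank of $M$ equals $\mathfrak{m}$.
   Context: An $\mathfrak{m}\times D'$ circulant matrix with first row $(\mathfrak{a}_{1},\ldots,\mathfrak{a}_{D'})$ is the matrix whose $i$-th row ($i=1,\ldots,\mathfrak{m}$) is the first row cyclically rotated to the right by $i-1$ positions; e.g. the second row is $(\mathfrak{a}_{D'},\mathfrak{a}_{1},\ldots,\mathfrak{a}_{D'-1})$. *)

From HB Require Import structures.
From mathcomp Require Import all_boot all_order all_algebra.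
Set Implicit Arguments. Unset Strict Implicit. Unset Printing Implicit Defensive.
Import GRing.Theory.
Local Open Scope ring_scope.

(* The m x D circulant matrix with first row (a 0, ..., a (D-1)) (0-indexed):
   row i is the first row cyclically rotated to the right by i positions,
   so its entry in column j is a ((j - i) mod D). *)
Definition circulant (R : nzRingType) (m D : nat) (a : nat -> R) : 'M[R]_(m, D) :=
  \matrix_(i < m, j < D) a ((j + (D - i %% D)) %% D)%N.

Definition row_pm (R : nzRingType) (j1 : nat) (k : nat) : R :=
  if k == 0%N then 1 else if k == j1.+1 then -1 else 0.

From HB Require Import structures.
From mathcomp Require Import all_boot all_order all_algebra.
From mathcomp Require Import zify.

(* Row i of the circulant matrix has 1 in column i and -1 in column
   i + j1 + 1 (mod D'), so a vector v with v M = 0, read as a sequence c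
   supported on [0, m), is invariant under the cyclic shift by j1 + 1.  Either
   the shift by j1 + 1 or the opposite shift by D' - j1 - 1 then moves every
   index of [0, m) forward without wrapping around, because 2m <= D' + 1;
   iterating it leaves the support, so c = 0 and the rows are independent. *)

Set Implicit Arguments. Unset Strict Implicit. Unset Printing Implicit Defensive.
Import GRing.Theory.
Local Open Scope ring_scope.

Lemma shift_invariant_eq0 (V : zmodType) (c : nat -> V) (m t : nat) :
  (0 < t)%N -> (forall j, (m <= j)%N -> c j = 0) ->
  (forall j, (j < m)%N -> c j = c (j + t)) ->
  forall j, c j = 0.
Proof.
move=> t_gt0 c_out c_shift j; move: {2}(m - j)%N (leqnn (m - j)) => n.
elim: n j => [|n IH] j le_mj; have [lt_jm|/c_out//] := ltnP j m.
- by move: le_mj; rewrite leqn0 subn_eq0 leqNgt lt_jm.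
- by rewrite c_shift // IH //; lia.
Qed.

Lemma cyclic_shift_invariant_eq0 (V : zmodType) (c : nat -> V) (D m s : nat) :
  (0 < s < D)%N -> (m.*2 <= D.+1)%N -> (forall j, (m <= j)%N -> c j = 0) ->
  (forall k, (k < D)%N -> c k = c ((k + (D - s)) %% D)%N) ->
  forall j, c j = 0.
Proof.
move=> s_bounds m_small c_out c_shift.
have [le_msD|lt_Dms] := leqP (m + s) D.
- apply: (shift_invariant_eq0 (t := s) _ c_out) => [|j lt_jm]; first lia.
  rewrite [RHS]c_shift; last lia.
  by rewrite -addnA subnKC ?modnDr ?modn_small //; lia.
- apply: (shift_invariant_eq0 (t := D - s) _ c_out) => [|j lt_jm]; first lia.
  by rewrite c_shift ?modn_small //; lia.
Qed.

Lemma modn_addsub_eq (D i k r : nat) : (i <= D)%N -> (r < D)%N ->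
  ((k + (D - i)) %% D == r)%N = (k == r + i %[mod D])%N.
Proof.
move=> le_iD lt_rD; rewrite -{1}(modn_small lt_rD) -(eqn_modDr i).
by rewrite -addnA subnK // modnDr.
Qed.

Lemma circulant_index_sym (D i k r : nat) : (i < D)%N -> (r < D)%N ->
  ((k + (D - i)) %% D == r)%N = ((k + (D - r)) %% D == i)%N.
Proof.
by move=> lt_iD lt_rD; rewrite !modn_addsub_eq 1?addnC // ltnW.
Qed.

Lemma row_pmE (R : nzRingType) (j1 k : nat) :
  row_pm R j1 k = (k == 0)%:R - (k == j1.+1)%:R.
Proof. by rewrite /row_pm; case: eqP => [->|_]; case: eqP; rewrite ?subr0 ?sub0r. Qed.

Definition row_nth (R : nzRingType) (m : nat) (v : 'rV[R]_m) (j : nat) : R :=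
  \sum_(i < m | val i == j) v 0 i.

Lemma row_nth_ord (R : nzRingType) (m : nat) (v : 'rV[R]_m) (i : 'I_m) :
  row_nth v i = v 0 i.
Proof.
rewrite /row_nth (bigD1 i) //= big1 ?addr0 // => i' /andP[/eqP eq_i' neq_i'].
by case/eqP: neq_i'; apply: val_inj.
Qed.

Lemma row_nth_out (R : nzRingType) (m : nat) (v : 'rV[R]_m) (j : nat) :
  (m <= j)%N -> row_nth v j = 0.
Proof.
move=> le_mj; rewrite /row_nth big_pred0 // => i.
by apply/negbTE; apply: contraTneq (ltn_ord i) => ->; rewrite -leqNgt.
Qed.

Lemma mul_row_pm_circulant (R : nzRingType) (m D j1 : nat) (v : 'rV[R]_m)
    (k : 'I_D) : (m <= D)%N -> (j1.+1 < D)%N ->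
  (v *m circulant m D (row_pm R j1)) 0 k
    = row_nth v k - row_nth v ((k + (D - j1.+1)) %% D).
Proof.
move=> le_mD lt_sD; rewrite mxE /row_nth !(big_mkcond (fun i => val i == _)).
rewrite -sumrB; apply: eq_bigr => i _.
have lt_iD : (i < D)%N by apply: leq_trans le_mD.
rewrite mxE (modn_small lt_iD) row_pmE mulrBr !mulr_natr !mulrb.
rewrite !(circulant_index_sym k lt_iD) ?subn0 ?modnDr; try lia.
rewrite (modn_small (ltn_ord k)).
by rewrite ![_ == val i]eq_sym.
Qed.

Theorem lemma6 (R : numFieldType) (D j1 j2 m : nat) :
  (2 <= D)%N -> (j1 + j2)%N = (D - 2)%N ->
  (m <= uphalf D)%N ->
  \rank (circulant m D (row_pm R j1)) = m.
Proof.
move=> le2D sum_j; rewrite geq_uphalf_double => m_small.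
have le_mD : (m <= D)%N by lia.
have lt_sD : (j1.+1 < D)%N by lia.
apply/eqP; apply: inj_row_free => v v_ker.
have v_shift (k : nat) : (k < D)%N ->
    row_nth v k = row_nth v ((k + (D - j1.+1)) %% D).
  move=> lt_kD; apply/eqP; rewrite -subr_eq0.
  by rewrite -(mul_row_pm_circulant v (Ordinal lt_kD)) // v_ker mxE.
have s_bounds : (0 < j1.+1 < D)%N by lia.
have v_eq0 :=
  cyclic_shift_invariant_eq0 s_bounds m_small (@row_nth_out _ _ v) v_shift.
by apply/rowP => i; rewrite mxE -row_nth_ord v_eq0.
Qed.
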